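(* Let $\mathfrak{s}(1/1)$ be the complex Lie superalgebra described in the context, let $d\in\mathbb{R}$, let $m\neq 0$, and let $V^d$ be the Verma module over $\mathfrak{s}(1/1)$ with lowest weight vector $v_0$ satisfying $\mathcal{Q}v_0=Pv_0=0$, $Dv_0=-d\,v_0$, $Mv_0=m\,v_0$, $\mathcal{X}v_0=\chi v_0$, where $\chi$ is an odd (Grassmann) parameter with $m=2\chi^2$. Then $V^d$ has precisely one singular vector (up to a nonzero scalar multiple) if and only if $d+\tfrac12\in\mathbb{Z}_{\geq 0}$, and in that case it is $$v_s=(G^2-2mK)^{d+1/2}\,(G-2\chi\mathcal{S})\,v_0 .$$
   Context: $\mathfrak{s}(1/1)$ (the $\mathcal{N}=1$ super Schrödinger algebra in $(1+1)$-dimensional spacetime) is the Lie superalgebra with even basis $H,D,K,P,G,M$ and odd basis $\mathcal{Q},\mathcal{S},\mathcal{X}$, whose nonvanishing brackets among basis elements are (up to (anti)symmetry): $[H,D]=2H$, $[H,K]=D$, $[D,K]=2K$, $[P,G]=M$, $[H,G]=P$, $[D,G]=G$, $[P,D]=P$, $[P,K]=G$; $\{\mathcal{Q},\mathcal{Q}\}=-2H$, $\{\mathcal{S},\mathcal{S}\}=-2K$, $\{\mathcal{X},\mathcal{X}\}=-M$, $\{\mathcal{Q},\mathcal{X}\}=-P$, $\{\mathcal{S},\mathcal{X}\}=-G$, $\{\mathcal{Q},\mathcal{S}\}=-D$; $[\mathcal{Q},D]=\mathcal{Q}$, $[\mathcal{Q},K]=\mathcal{S}$, $[D,\mathcal{S}]=\mathcal{S}$,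 $[H,\mathcal{S}]=\mathcal{Q}$, $[\mathcal{Q},G]=\mathcal{X}$, $[P,\mathcal{S}]=\mathcal{X}$. It is $\mathbb{Z}$-graded by $\deg K=2$, $\deg G=\deg\mathcal{S}=1$, $\deg D=\deg M=\deg\mathcal{X}=0$, $\deg P=\deg\mathcal{Q}=-1$, $\deg H=-2$; $\mathfrak{g}^+$, $\mathfrak{g}^0$, $\mathfrak{g}^-$ denote the spans of the generators of positive, zero, negative degree. A lowest weight vector $v_0$ is annihilated by $\mathfrak{g}^-$ and is an eigenvector of $\mathfrak{g}^0$ as stated in the claim (the odd parameter $\chi$ anticommutes with the odd generators). The Verma module is $V^d=U(\mathfrak{g}^+)v_0$, with basis $\{G^kK^\ell v_0,\ G^kK^\ell\mathcal{S}v_0 : k,\ell\in\mathbb{Z}_{\ge 0}\}$. A singular vector is a homogeneous element $v_s\in V^d$ (an eigenvector of $D$) with $v_s\notin\mathbb{C}v_0$ and $\mathfrak{g}^-v_s=0$. *)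

From HB Require Import structures.
From mathcomp Require Import all_boot all_order all_algebra.
From mathcomp Require Import reals complex.
Set Implicit Arguments. Unset Strict Implicit. Unset Printing Implicit Defensive.
Import Order.TTheory GRing.Theory Num.Theory.
Local Open Scope ring_scope.

Section S11.
Variables (R : realType) (V : lmodType R[i]).

Definition comm (f g : V -> V) (v : V) : V := f (g v) - g (f v).
Definition acomm (f g : V -> V) (v : V) : V := f (g v) + g (f v).

(* A representation of s(1/1) on V, together with the odd parameter chi
   realised as the (C-linear) operator "multiplication by chi" on V.
   Generators: even H D K P G M, odd Q S X. *)
Record s11_ops := S11Ops {
  opH : {linear V -> V}; opD : {linear V -> V}; opK : {linear V -> V};
  opP : {linear V -> V}; opG : {linear V -> V}; opM : {linear V -> V};
  opQ : {linear V -> V}; opS : {linear V -> V}; opX : {linear V -> V};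
  opchi : {linear V -> V} }.

Variable o : s11_ops.
Local Notation H := (opH o). Local Notation D := (opD o).
Local Notation K := (opK o). Local Notation P := (opP o).
Local Notation G := (opG o). Local Notation M := (opM o).
Local Notation Q := (opQ o). Local Notation S := (opS o).
Local Notation X := (opX o). Local Notation chi := (opchi o).

Definition is_s11_rep : Prop := forall v : V,
  comm H D v = 2%:R *: H v /\ comm H K v = D v /\ comm H P v = 0 /\
  comm H G v = P v /\ comm H M v = 0 /\ comm D K v = 2%:R *: K v /\
  comm P D v = P v /\ comm D G v = G v /\ comm D M v = 0 /\
  comm P K v = G v /\ comm K G v = 0 /\ comm K M v = 0 /\
  comm P G v = M v /\ comm P M v = 0 /\ comm G M v = 0 /\
  comm H Q v = 0 /\ comm H S v = Q v /\ comm H X v = 0 /\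
  comm Q D v = Q v /\ comm D S v = S v /\ comm D X v = 0 /\
  comm Q K v = S v /\ comm K S v = 0 /\ comm K X v = 0 /\
  comm P Q v = 0 /\ comm P S v = X v /\ comm P X v = 0 /\
  comm Q G v = X v /\ comm G S v = 0 /\ comm G X v = 0 /\
  comm M Q v = 0 /\ comm M S v = 0 /\ comm M X v = 0 /\
  acomm Q Q v = - (2%:R *: H v) /\ acomm S S v = - (2%:R *: K v) /\
  acomm X X v = - M v /\ acomm Q X v = - P v /\ acomm S X v = - G v /\
  acomm Q S v = - D v.

Definition is_odd_param (m : R[i]) : Prop := forall v : V,
  chi (chi v) = (m / 2%:R) *: v /\
  comm chi H v = 0 /\ comm chi D v = 0 /\ comm chi K v = 0 /\
  comm chi P v = 0 /\ comm chi G v = 0 /\ comm chi M v = 0 /\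
  acomm chi Q v = 0 /\ acomm chi S v = 0 /\ acomm chi X v = 0.

Definition pbw (v0 : V) (k l : nat) (s c : bool) : V :=
  iter c chi (iter k G (iter l K (iter s S v0))).

Definition pbw_sum (v0 : V) (n : nat) (f : nat -> nat -> bool -> bool -> R[i]) : V :=
  \sum_(k < n) \sum_(l < n) \sum_(s : bool) \sum_(c : bool)
     f k l s c *: pbw v0 k l s c.

(* V is the Verma module V^d with lowest weight vector v0:
   the PBW vectors form a basis of V (over C; equivalently
   {G^k K^l v0, G^k K^l S v0} is a basis over C[chi]) *)
Definition is_verma (d : R) (m : R[i]) (v0 : V) : Prop :=
  [/\ is_s11_rep, is_odd_param m,
      (Q v0 = 0 /\ P v0 = 0 /\ H v0 = 0 /\ D v0 = - (Complex d 0 *: v0) /\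
          M v0 = m *: v0 /\ X v0 = chi v0),
      (forall v : V, exists n f, v = pbw_sum v0 n f) &
      (forall n f, pbw_sum v0 n f = 0 ->
         forall (k l : 'I_n) s c, f k l s c = 0)].

Definition singular (v0 v : V) : Prop :=
  [/\ exists lam : R[i], D v = lam *: v,
      ~ (exists a b : R[i], v = a *: v0 + b *: chi v0),
      H v = 0, P v = 0 & Q v = 0].

(* v is unique up to a nonzero scalar a + b chi *)
Definition unique_singular (v0 v : V) : Prop :=
  singular v0 v /\
  forall w, singular v0 w -> exists a b : R[i], w = a *: v + b *: chi v.

Definition vs_formula (m : R[i]) (v0 : V) (n : nat) : V :=
  iter n (fun v => G (G v) - (2%:R * m) *: K v)
       (G v0 - 2%:R *: chi (S v0)).

End S11.

From HB Require Import structures.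
From mathcomp Require Import all_boot all_order all_algebra.
From mathcomp Require Import reals complex.
From mathcomp Require Import ring zify.
Set Implicit Arguments. Unset Strict Implicit. Unset Printing Implicit Defensive.
Import Order.TTheory GRing.Theory Num.Theory.
Local Open Scope ring_scope.

(** Write vectors of V^d in PBW coordinates f(k,l,s,c), the coefficient of
chi^c G^k K^l S^s v0.  The commutation relations turn P w = 0 and Q w = 0 into
linear recurrences for f.  Two of them at k = 0 combine into
(d + 1/2 - l) f(0,l,1,c) = 0, so a singular vector outside C[chi] v0 forces
d + 1/2 = l for some l: once all f(0,l,1,c) vanish, the recurrences kill every
coefficient outside C[chi] v0.  For existence, T = G^2 - 2mK commutes with P and
satisfies [Q,T] = 2(GX - mS), which gives Q (T^n u) = (1 + 2d - 2n) chi T^n v0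
for u = (G - 2 chi S) v0, a vector killed by P.  For uniqueness, subtract from
a singular w the C[chi]-multiple of T^n u with the same coefficients at
(0, n, 1, .); the recurrences push the difference into C[chi] v0, where the
D-eigenvalue of w forces it to vanish. *)

Section Iterates.
Variables (R : pzRingType) (V : lmodType R).
Implicit Types (A C : V -> V) (B : {linear V -> V}).

Lemma iter_commute (f g : V -> V) k x :
  (forall v, f (g v) = g (f v)) -> f (iter k g x) = iter k g (f x).
Proof. by move=> fg; elim: k => //= k IH; rewrite fg IH. Qed.

Lemma iter_linearD B k x y : iter k B (x + y) = iter k B x + iter k B y.
Proof. by elim: k => //= k ->; rewrite linearD. Qed.

Lemma iter_linearZ B k a x : iter k B (a *: x) = a *: iter k B x.
Proof. by elim: k => //= k ->; rewrite linearZ. Qed.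

Lemma iter_linear0 B k : iter k B 0 = 0.
Proof. by elim: k => //= k ->; rewrite linear0. Qed.

Lemma iter_linearN B k x : iter k B (- x) = - iter k B x.
Proof. by rewrite -scaleN1r iter_linearZ scaleN1r. Qed.

Lemma scale_iter_pred (f : V -> V) k x :
  k%:R *: f (iter k.-1 f x) = k%:R *: iter k f x.
Proof. by case: k => [|k]; rewrite ?scale0r. Qed.

Lemma scale_iter_predr (f : V -> V) k x :
  k%:R *: iter k.-1 f (f x) = k%:R *: iter k f x.
Proof. by case: k => [|k]; rewrite ?scale0r // iterSr. Qed.

Lemma iter_commutator A B C k y :
  (forall v, A (B v) = B (A v) + C v) -> (forall v, C (B v) = B (C v)) ->
  A (iter k B y) = iter k B (A y) + k%:R *: iter k.-1 B (C y).
Proof.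
move=> AB CB; elim: k => [|k IH]; first by rewrite scale0r addr0.
rewrite /= AB IH linearD linearZ_LR (iter_commute _ _ CB) -addrA; congr (_ + _).
by rewrite scale_iter_pred -[k.+1]addn1 natrD scalerDl scale1r.
Qed.

Lemma iter_commutator_scale A B a k y :
  (forall v, A (B v) = B (A v) + a *: B v) ->
  A (iter k B y) = iter k B (A y) + (k%:R * a) *: iter k B y.
Proof.
move=> AB; elim: k => [|k IH]; first by rewrite mul0r scale0r addr0.
rewrite /= AB IH linearD linearZ_LR -addrA -scalerDl; congr (_ + _ *: _).
by rewrite -[k.+1]addn1 natrD mulrDl mul1r.
Qed.

End Iterates.

Section BoxSums.
Variable U : nmodType.
Implicit Types (f : nat -> U) (F : nat -> nat -> bool -> bool -> U).

Definition box_sum B F :=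
  \sum_(k < B) \sum_(l < B) \sum_(s : bool) \sum_(c : bool) F k l s c.

Lemma eq_box_sum B F F' : (forall k l s c, F k l s c = F' k l s c) ->
  box_sum B F = box_sum B F'.
Proof.
move=> FF'; apply: eq_bigr => k _; apply: eq_bigr => l _.
by apply: eq_bigr => s _; apply: eq_bigr => c _.
Qed.

Lemma box_sumD B F F' :
  box_sum B (fun k l s c => F k l s c + F' k l s c) = box_sum B F + box_sum B F'.
Proof.
rewrite -big_split; apply: eq_bigr => k _; rewrite -big_split.
apply: eq_bigr => l _; rewrite -big_split; apply: eq_bigr => s _.
by rewrite -big_split.
Qed.

Lemma sum_ord_succ_shift f B : f 0%N = 0 -> f B = 0 ->
  \sum_(k < B) f k = \sum_(k < B) f k.+1.
Proof.
move=> f0 fB; rewrite -!(big_mkord xpredT).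
have := @big_nat_recl _ 0 +%R B 0 f (leq0n B).
rewrite big_nat_recr //= f0 fB add0r addr0.
by move=> ->; rewrite big_mkord.
Qed.

Lemma sum_ord_pred_shift f B : f B.-1 = 0 ->
  \sum_(k < B) f k = \sum_(k < B) (if val k is k'.+1 then f k' else 0).
Proof.
case: B => [|B] /= fB; first by rewrite !big_ord0.
by rewrite big_ord_recr big_ord_recl /= fB addr0 add0r.
Qed.

Lemma box_sum_k_succ B F :
  (forall l s c, F 0%N l s c = 0) -> (forall l s c, F B l s c = 0) ->
  box_sum B F = box_sum B (fun k => F k.+1).
Proof.
move=> F0 FB; rewrite /box_sum (sum_ord_succ_shift
  (f := fun k => \sum_(l < B) \sum_(s : bool) \sum_(c : bool) F k l s c)) //.
  by rewrite big1 // => l _; rewrite big1 // => s _; rewrite big1.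
by rewrite big1 // => l _; rewrite big1 // => s _; rewrite big1.
Qed.

Lemma box_sum_l_succ B F :
  (forall k s c, F k 0%N s c = 0) -> (forall k s c, F k B s c = 0) ->
  box_sum B F = box_sum B (fun k l => F k l.+1).
Proof.
move=> F0 FB; apply: eq_bigr => k _; rewrite (sum_ord_succ_shift
  (f := fun l => \sum_(s : bool) \sum_(c : bool) F k l s c)) //.
  by rewrite big1 // => s _; rewrite big1.
by rewrite big1 // => s _; rewrite big1.
Qed.

Lemma box_sum_k_pred B F : (forall l s c, F B.-1 l s c = 0) ->
  box_sum B F = box_sum B (fun k l s c => if k is k'.+1 then F k' l s c else 0).
Proof.
move=> FB; rewrite /box_sum (sum_ord_pred_shift
  (f := fun k => \sum_(l < B) \sum_(s : bool) \sum_(c : bool) F k l s c)).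
  apply: eq_bigr => -[[|k] ?] _ //=.
  by rewrite big1 // => l _; rewrite big1 // => s _; rewrite big1.
by rewrite big1 // => l _; rewrite big1 // => s _; rewrite big1.
Qed.

Lemma box_sum_l_pred B F : (forall k s c, F k B.-1 s c = 0) ->
  box_sum B F = box_sum B (fun k l s c => if l is l'.+1 then F k l' s c else 0).
Proof.
move=> FB; apply: eq_bigr => k _; rewrite (sum_ord_pred_shift
  (f := fun l => \sum_(s : bool) \sum_(c : bool) F k l s c)).
  apply: eq_bigr => -[[|l] ?] _ //=.
  by rewrite big1 // => s _; rewrite big1.
by rewrite big1 // => s _; rewrite big1.
Qed.

Lemma box_sum_flip_s B F : box_sum B F = box_sum B (fun k l s c => F k l (~~ s) c).
Proof.
apply: eq_bigr => k _; apply: eq_bigr => l _.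
by rewrite big_bool [RHS]big_bool /= addrC.
Qed.

Lemma box_sum_flip_c B F : box_sum B F = box_sum B (fun k l s c => F k l s (~~ c)).
Proof.
apply: eq_bigr => k _; apply: eq_bigr => l _; apply: eq_bigr => s _.
by rewrite big_bool [RHS]big_bool /= addrC.
Qed.

Lemma box_sum1 B F k0 l0 s0 c0 : (k0 < B)%N -> (l0 < B)%N ->
  (forall k l s c, [|| k != k0, l != l0, s != s0 | c != c0] -> F k l s c = 0) ->
  box_sum B F = F k0 l0 s0 c0.
Proof.
move=> hk hl F0.
have inner_s k l : \sum_(s : bool) \sum_(c : bool) F k l s c =
    if (k == k0) && (l == l0) then F k0 l0 s0 c0 else 0.
  rewrite (bigD1 s0) //= (bigD1 c0) //=.
  rewrite [\sum_(i | i != s0) _]big1 => [|s ns]; last first.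
    by rewrite big1 // => c _; rewrite F0 // ns !orbT.
  rewrite [\sum_(i | i != c0) _]big1 => [|c nc]; last by rewrite F0 // nc !orbT.
  rewrite !addr0; case: ifP => [/andP[/eqP-> /eqP->] // | /negbT kl].
  by apply: F0; rewrite orbA -negb_and kl.
rewrite /box_sum; under eq_bigr => k _ do under eq_bigr => l _ do rewrite inner_s.
under eq_bigr => k _ do
  rewrite -big_mkcond (big_ord1_cond_eq _ (fun=> F k0 l0 s0 c0) (fun=> k == k0 :> nat)) hl.
by rewrite -big_mkcond (big_ord1_eq _ (fun=> F k0 l0 s0 c0)) hk.
Qed.

End BoxSums.

Lemma linear_box_sum (R : pzRingType) (U U' : lmodType R) (A : {linear U -> U'})
    B (F : nat -> nat -> bool -> bool -> U) :
  A (box_sum B F) = box_sum B (fun k l s c => A (F k l s c)).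
Proof.
rewrite linear_sum; apply: eq_bigr => k _; rewrite linear_sum.
apply: eq_bigr => l _; rewrite linear_sum; apply: eq_bigr => s _.
by rewrite linear_sum.
Qed.

Lemma box_sumZ (R : pzRingType) (U : lmodType R) (a : R) B
    (F : nat -> nat -> bool -> bool -> U) :
  a *: box_sum B F = box_sum B (fun k l s c => a *: F k l s c).
Proof.
rewrite scaler_sumr; apply: eq_bigr => k _; rewrite scaler_sumr.
apply: eq_bigr => l _; rewrite scaler_sumr; apply: eq_bigr => s _.
by rewrite scaler_sumr.
Qed.

Section Brackets.
Variables (R : realType) (V : lmodType R[i]).
Implicit Types (f g : V -> V) (v h : V).

Lemma comm_addr f g v h : comm f g v = h -> f (g v) = g (f v) + h.
Proof. by move=> <-; rewrite /comm addrC subrK. Qed.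

Lemma comm0 f g v : comm f g v = 0 -> f (g v) = g (f v).
Proof. by move/comm_addr; rewrite addr0. Qed.

Lemma acomm_oppr f g v h : acomm f g v = h -> f (g v) = - g (f v) + h.
Proof. by move=> <-; rewrite /acomm addrCA addNr addr0. Qed.

Lemma acomm0 f g v : acomm f g v = 0 -> f (g v) = - g (f v).
Proof. by move/acomm_oppr; rewrite addr0. Qed.

Lemma acommC f g v : acomm f g v = acomm g f v.
Proof. exact: addrC. Qed.

End Brackets.

Section S11.
Variables (R : realType) (V : lmodType R[i]) (o : s11_ops V) (m : R[i]).
Hypotheses (rep : is_s11_rep o) (odd_chi : is_odd_param o m).
Local Notation H := (opH o). Local Notation D := (opD o).
Local Notation K := (opK o). Local Notation P := (opP o).
Local Notation G := (opG o). Local Notation M := (opM o).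
Local Notation Q := (opQ o). Local Notation S := (opS o).
Local Notation X := (opX o). Local Notation chi := (opchi o).

Local Ltac rep_rel v := have := rep v; intuition.
Local Ltac odd_rel v := have := odd_chi v; intuition.

Lemma commPG v : P (G v) = G (P v) + M v. Proof. by apply: comm_addr; rep_rel v. Qed.
Lemma commPK v : P (K v) = K (P v) + G v. Proof. by apply: comm_addr; rep_rel v. Qed.
Lemma commPS v : P (S v) = S (P v) + X v. Proof. by apply: comm_addr; rep_rel v. Qed.
Lemma commQG v : Q (G v) = G (Q v) + X v. Proof. by apply: comm_addr; rep_rel v. Qed.
Lemma commQK v : Q (K v) = K (Q v) + S v. Proof. by apply: comm_addr; rep_rel v. Qed.
Lemma commDG v : D (G v) = G (D v) + G v. Proof. by apply: comm_addr; rep_rel v. Qed.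
Lemma commDK v : D (K v) = K (D v) + 2%:R *: K v. Proof. by apply: comm_addr; rep_rel v. Qed.
Lemma commDS v : D (S v) = S (D v) + S v. Proof. by apply: comm_addr; rep_rel v. Qed.
Lemma acommQS v : Q (S v) = - S (Q v) - D v. Proof. by apply: acomm_oppr; rep_rel v. Qed.
Lemma acommXS v : X (S v) = - S (X v) - G v.
Proof. by apply: acomm_oppr; rewrite acommC; rep_rel v. Qed.

Lemma commGK v : G (K v) = K (G v). Proof. by apply/esym/comm0; rep_rel v. Qed.
Lemma commGS v : G (S v) = S (G v). Proof. by apply: comm0; rep_rel v. Qed.
Lemma commKS v : K (S v) = S (K v). Proof. by apply: comm0; rep_rel v. Qed.
Lemma commXG v : X (G v) = G (X v). Proof. by apply/esym/comm0; rep_rel v. Qed.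
Lemma commXK v : X (K v) = K (X v). Proof. by apply/esym/comm0; rep_rel v. Qed.
Lemma commMG v : M (G v) = G (M v). Proof. by apply/esym/comm0; rep_rel v. Qed.
Lemma commMK v : M (K v) = K (M v). Proof. by apply/esym/comm0; rep_rel v. Qed.
Lemma commMS v : M (S v) = S (M v). Proof. by apply: comm0; rep_rel v. Qed.

Lemma commPchi v : P (chi v) = chi (P v). Proof. by apply/esym/comm0; odd_rel v. Qed.
Lemma commDchi v : D (chi v) = chi (D v). Proof. by apply/esym/comm0; odd_rel v. Qed.
Lemma commGchi v : G (chi v) = chi (G v). Proof. by apply/esym/comm0; odd_rel v. Qed.
Lemma commKchi v : K (chi v) = chi (K v). Proof. by apply/esym/comm0; odd_rel v. Qed.
Lemma commMchi v : M (chi v) = chi (M v). Proof. by apply/esym/comm0; odd_rel v. Qed.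
Lemma acommQchi v : Q (chi v) = - chi (Q v).
Proof. by apply: acomm0; rewrite acommC; odd_rel v. Qed.
Lemma acommSchi v : S (chi v) = - chi (S v).
Proof. by apply: acomm0; rewrite acommC; odd_rel v. Qed.
Lemma acommXchi v : X (chi v) = - chi (X v).
Proof. by apply: acomm0; rewrite acommC; odd_rel v. Qed.

Lemma chi_sqr v : chi (chi v) = (m / 2%:R) *: v. Proof. by odd_rel v. Qed.

Lemma two_neq0 : (2%:R : R[i]) != 0. Proof. by rewrite pnatr_eq0. Qed.

Lemma S_sqr v : S (S v) = - K v.
Proof.
have SS : S (S v) + S (S v) = - (2%:R *: K v) by rep_rel v.
apply: (scalerI two_neq0).
by rewrite scalerN -SS scaler_nat mulr2n.
Qed.

Lemma H_eq0_of_Q v : Q v = 0 -> H v = 0.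
Proof.
move=> Qv0; have : acomm Q Q v = - (2%:R *: H v) by rep_rel v.
rewrite /acomm Qv0 linear0 addr0 => /eqP; rewrite eq_sym oppr_eq0 scaler_eq0.
by rewrite (negbTE two_neq0) => /eqP.
Qed.

Lemma two_half : (2%:R * (m / 2%:R) : R[i]) = m.
Proof. by rewrite mulrC -mulrA mulVf ?two_neq0 // mulr1. Qed.

Lemma natS_neq0 k : (k.+1%:R : R[i]) != 0. Proof. by rewrite pnatr_eq0. Qed.

(** * Action on the PBW basis *)

Section Verma.
Variables (d : R) (v0 : V).
Local Notation dC := (Complex d 0).
Local Notation e := (pbw o v0).
Hypotheses (m_neq0 : m != 0) (Qv0 : Q v0 = 0) (Pv0 : P v0 = 0)
  (Dv0 : D v0 = - (dC *: v0)) (Mv0 : M v0 = m *: v0) (Xv0 : X v0 = chi v0).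
Hypotheses (pbw_span : forall v : V, exists n f, v = pbw_sum o v0 n f)
  (pbw_free : forall n f, pbw_sum o v0 n f = 0 ->
     forall (k l : 'I_n) s c, f k l s c = 0).

Local Notation coef := (nat -> nat -> bool -> bool -> R[i]).

Lemma pbw_sumE B f :
  pbw_sum o v0 B f = box_sum B (fun k l s c => f k l s c *: e k l s c).
Proof. by []. Qed.

Definition pbw0 k l (s : bool) := iter k G (iter l K (iter s S v0)).

Lemma M_pbw k l s c : M (e k l s c) = m *: e k l s c.
Proof.
have MSv0 : M (iter s S v0) = m *: iter s S v0.
  by case: s => /=; rewrite ?commMS Mv0 ?linearZ.
rewrite /pbw (iter_commute _ _ commMchi) (iter_commute _ _ commMG).
by rewrite (iter_commute _ _ commMK) MSv0 !iter_linearZ.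
Qed.

Lemma M_scalar v : M v = m *: v.
Proof.
have [n [f ->]] := pbw_span v.
rewrite pbw_sumE linear_box_sum box_sumZ; apply: eq_box_sum => k l s c /=.
by rewrite linearZ_LR M_pbw !scalerA mulrC.
Qed.

Lemma G_pbw k l s c : G (e k l s c) = e k.+1 l s c.
Proof. exact: iter_commute commGchi. Qed.

Lemma K_pbw k l s c : K (e k l s c) = e k l.+1 s c.
Proof.
by rewrite /pbw (iter_commute _ _ commKchi) (iter_commute _ _ (fun v => esym (commGK v))).
Qed.

Lemma chi_pbw k l s c :
  chi (e k l s c) = (if c then m / 2%:R else 1) *: e k l s (~~ c).
Proof. by case: c; rewrite /= ?chi_sqr ?scale1r. Qed.

Lemma chi_iterG k x : chi (iter k G x) = iter k G (chi x).
Proof. exact: iter_commute (fun v => esym (commGchi v)). Qed.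

Lemma chi_iterK k x : chi (iter k K x) = iter k K (chi x).
Proof. exact: iter_commute (fun v => esym (commKchi v)). Qed.

Lemma P_pbw0 k l s : P (pbw0 k l s) =
  (k%:R * m) *: pbw0 k.-1 l s + l%:R *: pbw0 k.+1 l.-1 s
  + (if s then chi (pbw0 k l false) else 0).
Proof.
have PG v : P (G v) = G (P v) + m *: v by rewrite commPG M_scalar.
rewrite /pbw0 (iter_commutator (C := fun v => m *: v) _ _ PG); last first.
  by move=> v; rewrite linearZ.
have PSv0 : P (iter s S v0) = if s then chi v0 else 0.
  by case: s => /=; rewrite ?commPS Pv0 ?linear0 ?add0r.
rewrite (iter_commutator _ _ commPK commGK) PSv0 iter_linearD !iter_linearZ.
rewrite -(iter_commute _ _ commGK) -iterSr scalerA -addrA addrC.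
congr (_ + _); first exact: addrC.
case: s PSv0 => _ /=; last by rewrite !iter_linear0.
by rewrite chi_iterG chi_iterK.
Qed.

Lemma Q_pbw0 k l (s : bool) : Q (pbw0 k l s) = k%:R *: chi (pbw0 k.-1 l s)
  + (if s then (dC - k%:R - l%:R) *: pbw0 k l false else l%:R *: pbw0 k l.-1 true).
Proof.
rewrite /pbw0 (iter_commutator _ _ commQG commXG).
rewrite (iter_commutator _ _ commQK (fun v => esym (commKS v))).
rewrite (iter_commute _ _ commXK); case: s => /=.
  rewrite acommQS Qv0 linear0 oppr0 add0r Dv0 opprK S_sqr iter_linearN scalerN.
  rewrite scale_iter_predr acommXS Xv0 acommSchi opprK !iter_linearD !iter_linearN.
  rewrite !iter_linearZ -(iter_commute _ _ commGK) scalerBr scale_iter_predr.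
  rewrite chi_iterG chi_iterK !scalerBl addrC -addrA; congr (_ + _).
  by rewrite addrCA addrA.
by rewrite Qv0 Xv0 !iter_linear0 add0r iter_linearZ addrC chi_iterG chi_iterK.
Qed.

Definition pbw_weight k l (s : bool) : R[i] := - dC + k%:R + 2%:R * l%:R + s%:R.

Lemma D_pbw k l s c : D (e k l s c) = pbw_weight k l s *: e k l s c.
Proof.
have DG v : D (G v) = G (D v) + 1 *: G v by rewrite scale1r commDG.
have DSv0 : D (iter s S v0) = (- dC + s%:R) *: iter s S v0.
  case: s => /=; last by rewrite Dv0 addr0 scaleNr.
  by rewrite commDS Dv0 linearN linearZ_LR scalerDl scaleNr scale1r.
rewrite /pbw (iter_commute _ _ commDchi) (iter_commutator_scale _ _ DG).
rewrite (iter_commutator_scale _ _ commDK) DSv0 !iter_linearD !iter_linearZ.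
by rewrite -!scalerDl /pbw_weight; congr (_ *: _); ring.
Qed.

Lemma P_pbw k l s c : P (e k l s c) = (k%:R * m) *: e k.-1 l s c
  + l%:R *: e k.+1 l.-1 s c
  + (if s then (if c then m / 2%:R else 1) *: e k l false (~~ c) else 0).
Proof.
case: c; last by rewrite /= P_pbw0 scale1r.
rewrite /= commPchi P_pbw0 !linearD !linearZ_LR.
by case: s => /=; rewrite ?linear0 ?chi_sqr.
Qed.

Local Notation sgn c := (if c then -1 else 1).

Lemma Q_pbw k l s c : Q (e k l s c) =
  k%:R *: ((if c then - (m / 2%:R) else 1) *: e k.-1 l s (~~ c))
  + (if s then 0 else l%:R *: (sgn c *: e k l.-1 true c))
  + (if s then (sgn c * (dC - k%:R - l%:R)) *: e k l false c else 0).
Proof.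
case: c; rewrite /= ?acommQchi Q_pbw0; last first.
  by case: s; rewrite ?scale1r ?mul1r ?addr0 ?add0r.
case: s; rewrite linearD !(linearZ_LR chi) chi_sqr opprD.
  by rewrite mulN1r addr0 !scaleNr scalerN.
by rewrite addr0 !scaleNr scale1r !scalerN.
Qed.


Definition vanish_outside N (f : coef) :=
  forall k l s c, ((N <= k) || (N <= l))%N -> f k l s c = 0.

Lemma vanish_outsideW N N' f :
  (N <= N')%N -> vanish_outside N f -> vanish_outside N' f.
Proof. by move=> NN' f0 k l s c kl; apply: f0; lia. Qed.

Lemma pbw_sumD B f g : pbw_sum o v0 B (fun k l s c => f k l s c + g k l s c)
  = pbw_sum o v0 B f + pbw_sum o v0 B g.
Proof.
by rewrite !pbw_sumE -box_sumD; apply: eq_box_sum => k l s c; rewrite scalerDl.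
Qed.

Lemma pbw_sum_lincomb B a b f g :
  pbw_sum o v0 B (fun k l s c => a * f k l s c + b * g k l s c)
  = a *: pbw_sum o v0 B f + b *: pbw_sum o v0 B g.
Proof.
rewrite !pbw_sumE !box_sumZ -box_sumD; apply: eq_box_sum => k l s c.
by rewrite scalerDl !scalerA.
Qed.

Lemma pbw_sum_widen N B f : vanish_outside N f -> (N <= B)%N ->
  pbw_sum o v0 N f = pbw_sum o v0 B f.
Proof.
move=> f0 NB; rewrite /pbw_sum (big_ord_widen B (fun k => \sum_(l < N) \sum_(s : bool)
  \sum_(c : bool) f k l s c *: e k l s c)) // big_mkcond.
apply: eq_bigr => k _; case: ifP => kN; last first.
  apply/esym/big1 => l _; apply: big1 => s _; apply: big1 => c _.
  by rewrite f0 ?scale0r // leqNgt kN.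
rewrite (big_ord_widen B
  (fun l => \sum_(s : bool) \sum_(c : bool) f k l s c *: e k l s c)) //.
rewrite big_mkcond; apply: eq_bigr => l _; case: ifP => // lN.
apply/esym/big1 => s _; apply: big1 => c _.
by rewrite f0 ?scale0r // [(N <= l)%N]leqNgt lN orbT.
Qed.

Definition pbw_coords (v : V) (f : coef) := exists N,
  vanish_outside N f /\ forall B, (N <= B)%N -> v = pbw_sum o v0 B f.

Lemma pbw_coords_exists v : exists f, pbw_coords v f.
Proof.
have [n [f ->]] := pbw_span v.
pose g k l s c := if ((k < n) && (l < n))%N then f k l s c else 0.
have g0 : vanish_outside n g.
  by move=> k l s c; rewrite /g; case: ltnP => //= _; rewrite leqNgt => /negbTE->.
exists g, n; split=> // B nB; rewrite -(pbw_sum_widen g0 nB).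
apply: eq_bigr => k _; apply: eq_bigr => l _; apply: eq_bigr => s _.
by apply: eq_bigr => c _; rewrite /g !ltn_ord.
Qed.

Lemma pbw_coords_lincomb a b v v' f g : pbw_coords v f -> pbw_coords v' g ->
  pbw_coords (a *: v + b *: v') (fun k l s c => a * f k l s c + b * g k l s c).
Proof.
move=> [N [f0 vf]] [N' [g0 vg]]; exists (maxn N N'); split.
  by move=> k l s c kl; rewrite f0 ?g0 ?mulr0 ?addr0 //; lia.
move=> B; rewrite geq_max => /andP[NB N'B].
by rewrite pbw_sum_lincomb -vf -?vg.
Qed.

Lemma pbw_coords_uniq v f g : pbw_coords v f -> pbw_coords v g ->
  forall k l s c, f k l s c = g k l s c.
Proof.
move=> [N [_ vf]] [N' [_ vg]] k l s c.
pose B := (maxn (maxn N N') (maxn k l)).+1.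
have NB : (N <= B)%N by rewrite /B; lia.
have N'B : (N' <= B)%N by rewrite /B; lia.
have kB : (k < B)%N by rewrite /B; lia.
have lB : (l < B)%N by rewrite /B; lia.
have : pbw_sum o v0 B (fun k l s c => 1 * f k l s c + -1 * g k l s c) = 0.
  by rewrite pbw_sum_lincomb -vf -?vg // scale1r scaleN1r subrr.
move/pbw_free/(_ (Ordinal kB) (Ordinal lB) s c) => /=.
by rewrite mul1r mulN1r => /eqP; rewrite subr_eq0 => /eqP.
Qed.

Lemma pbw_coords_inj v v' f g : pbw_coords v f -> pbw_coords v' g ->
  (forall k l s c, f k l s c = g k l s c) -> v = v'.
Proof.
move=> [N [_ vf]] [N' [_ vg]] fg.
rewrite (vf (maxn N N')) ?leq_maxl // (vg (maxn N N')) ?leq_maxr //.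
by rewrite !pbw_sumE; apply: eq_box_sum => k l s c; rewrite fg.
Qed.

Definition pbw_delta k0 l0 s0 c0 : coef := fun k l s c =>
  if [&& k == k0, l == l0, s == s0 & c == c0] then 1 else 0.

Lemma pbw_coords_pbw k l s c : pbw_coords (e k l s c) (pbw_delta k l s c).
Proof.
exists (maxn k l).+1; split.
  move=> k' l' s' c' kl; rewrite /pbw_delta.
  by case: ifP => // /and4P[/eqP kk /eqP ll _ _]; exfalso; lia.
move=> B klB; rewrite pbw_sumE (@box_sum1 _ _ _ k l s c).
- by rewrite /pbw_delta !eqxx scale1r.
- by lia.
- by lia.
move=> k' l' s' c' ne; rewrite /pbw_delta.
case: ifP => [/and4P[/eqP kk /eqP ll /eqP ss /eqP cc]|]; last by rewrite scale0r.
by move: ne; rewrite kk ll ss cc !eqxx.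
Qed.

Definition G_coef (f : coef) : coef := fun k l s c =>
  if k is k'.+1 then f k' l s c else 0.
Definition K_coef (f : coef) : coef := fun k l s c =>
  if l is l'.+1 then f k l' s c else 0.
Definition chi_coef (f : coef) : coef := fun k l s c =>
  (if c then 1 else m / 2%:R) * f k l s (~~ c).
Definition D_coef (f : coef) : coef := fun k l s c => pbw_weight k l s * f k l s c.
Definition P_coef (f : coef) : coef := fun k l s c =>
  k.+1%:R * m * f k.+1 l s c + (if k is k'.+1 then l.+1%:R * f k' l.+1 s c else 0)
  + (if s then 0 else if c then f k l true false else m / 2%:R * f k l true true).
Definition Q_coef (f : coef) : coef := fun k l s c =>
  k.+1%:R * (if c then 1 else - (m / 2%:R)) * f k.+1 l s (~~ c)
  + (if s then l.+1%:R * sgn c * f k l.+1 false c else 0)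
  + (if s then 0 else sgn c * (dC - k%:R - l%:R) * f k l true c).

Section CoefSums.
Variables (N B : nat) (f : coef).
Hypotheses (f0 : vanish_outside N f) (NB : (N < B)%N).

Lemma G_pbw_sum : G (pbw_sum o v0 B f) = pbw_sum o v0 B (G_coef f).
Proof.
rewrite !pbw_sumE linear_box_sum.
under eq_box_sum => k l s c do rewrite linearZ_LR G_pbw.
rewrite box_sum_k_pred => [|l s c]; last by rewrite f0 ?scale0r //; lia.
by apply: eq_box_sum => -[|k] l s c //=; rewrite scale0r.
Qed.

Lemma K_pbw_sum : K (pbw_sum o v0 B f) = pbw_sum o v0 B (K_coef f).
Proof.
rewrite !pbw_sumE linear_box_sum.
under eq_box_sum => k l s c do rewrite linearZ_LR K_pbw.
rewrite box_sum_l_pred => [|k s c]; last by rewrite f0 ?scale0r //; lia.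
by apply: eq_box_sum => k [|l] s c //=; rewrite scale0r.
Qed.

Lemma chi_pbw_sum : chi (pbw_sum o v0 B f) = pbw_sum o v0 B (chi_coef f).
Proof.
rewrite !pbw_sumE linear_box_sum.
under eq_box_sum => k l s c do rewrite linearZ_LR chi_pbw.
rewrite box_sum_flip_c; apply: eq_box_sum => k l s c.
by rewrite /= negbK scalerA mulrC; case: c.
Qed.

Lemma D_pbw_sum : D (pbw_sum o v0 B f) = pbw_sum o v0 B (D_coef f).
Proof.
rewrite !pbw_sumE linear_box_sum; apply: eq_box_sum => k l s c /=.
by rewrite linearZ_LR D_pbw scalerA mulrC.
Qed.

Lemma P_pbw_sum : P (pbw_sum o v0 B f) = pbw_sum o v0 B (P_coef f).
Proof.
rewrite pbw_sumE linear_box_sum.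
under eq_box_sum => k l s c do rewrite linearZ_LR P_pbw !scalerDr.
rewrite !box_sumD /P_coef !pbw_sumD !pbw_sumE; congr (_ + _ + _).
- rewrite box_sum_k_succ => [|l s c|l s c]; last by rewrite f0 ?scale0r //; lia.
  + by apply: eq_box_sum => k l s c /=; rewrite scalerA mulrC.
  + by rewrite mul0r scale0r scaler0.
- rewrite box_sum_l_succ => [|k s c|k s c]; last by rewrite f0 ?scale0r //; lia.
  + rewrite box_sum_k_pred => [|l s c]; last by rewrite f0 ?scale0r //; lia.
    by apply: eq_box_sum => -[|k] l s c /=; rewrite ?scale0r // scalerA mulrC.
  + by rewrite scale0r scaler0.
- apply: eq_bigr => k _; apply: eq_bigr => l _.
  rewrite !big_bool /= !scaler0 !scale0r !addr0 !add0r scalerA addrC.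
  by rewrite scale1r (mulrC (f k l true true)).
Qed.

Lemma Q_pbw_sum : Q (pbw_sum o v0 B f) = pbw_sum o v0 B (Q_coef f).
Proof.
rewrite pbw_sumE linear_box_sum.
under eq_box_sum => k l s c do rewrite linearZ_LR Q_pbw !scalerDr.
rewrite !box_sumD /Q_coef !pbw_sumD !pbw_sumE; congr (_ + _ + _).
- rewrite box_sum_k_succ => [|l s c|l s c]; last by rewrite f0 ?scale0r //; lia.
  + rewrite box_sum_flip_c; apply: eq_box_sum => k l s c /=.
    by case: c; rewrite /= !scalerA mulrC.
  + by rewrite scale0r scaler0.
- rewrite box_sum_l_succ => [|k s c|k s c]; last by rewrite f0 ?scale0r //; lia.
  + rewrite box_sum_flip_s; apply: eq_box_sum => k l s c /=.
    by case: s => /=; rewrite ?scaler0 ?scale0r // !scalerA mulrC.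
  + by case: s; rewrite ?scale0r ?scaler0.
- rewrite box_sum_flip_s; apply: eq_box_sum => k l s c /=.
  by case: s; rewrite ?scaler0 ?scale0r // scalerA mulrC.
Qed.

End CoefSums.

Lemma vanish_G_coef N f : vanish_outside N f -> vanish_outside N.+1 (G_coef f).
Proof. by move=> f0 [|k] l s c kl //=; apply: f0; lia. Qed.

Lemma vanish_K_coef N f : vanish_outside N f -> vanish_outside N.+1 (K_coef f).
Proof. by move=> f0 k [|l] s c kl //=; apply: f0; lia. Qed.

Lemma vanish_chi_coef N f : vanish_outside N f -> vanish_outside N (chi_coef f).
Proof. by move=> f0 k l s c kl; rewrite /chi_coef f0 ?mulr0. Qed.

Lemma vanish_D_coef N f : vanish_outside N f -> vanish_outside N (D_coef f).
Proof. by move=> f0 k l s c kl; rewrite /D_coef f0 ?mulr0. Qed.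

Lemma vanish_P_coef N f : vanish_outside N f -> vanish_outside N.+1 (P_coef f).
Proof.
move=> f0 k l s c kl; rewrite /P_coef (f0 k.+1) ?mulr0 ?add0r; last by lia.
have -> : (if k is k'.+1 then l.+1%:R * f k' l.+1 s c else 0) = 0.
  by case: k kl => // k kl; rewrite f0 ?mulr0 //; lia.
by case: s; rewrite add0r // ; case: c; rewrite f0 ?mulr0 //; lia.
Qed.

Lemma vanish_Q_coef N f : vanish_outside N f -> vanish_outside N.+1 (Q_coef f).
Proof.
move=> f0 k l s c kl; rewrite /Q_coef (f0 k.+1) ?mulr0 ?add0r; last by lia.
by case: s; rewrite f0 ?mulr0 ?addr0 //; lia.
Qed.

Lemma pbw_coords_map (A : V -> V) (A_coef : coef -> coef) :
  (forall N f, vanish_outside N f -> vanish_outside N.+1 (A_coef f)) ->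
  (forall N B f, vanish_outside N f -> (N < B)%N ->
     A (pbw_sum o v0 B f) = pbw_sum o v0 B (A_coef f)) ->
  forall v f, pbw_coords v f -> pbw_coords (A v) (A_coef f).
Proof.
move=> vanishA sumA v f [N [f0 vf]]; exists N.+1; split; first exact: vanishA.
by move=> B NB; rewrite (vf B (ltnW NB)) (sumA N).
Qed.

Lemma pbw_coords_G v f : pbw_coords v f -> pbw_coords (G v) (G_coef f).
Proof. by apply: pbw_coords_map => [N g|N B g]; [apply: vanish_G_coef|apply: G_pbw_sum]. Qed.

Lemma pbw_coords_K v f : pbw_coords v f -> pbw_coords (K v) (K_coef f).
Proof. by apply: pbw_coords_map => [N g|N B g]; [apply: vanish_K_coef|apply: K_pbw_sum]. Qed.

Lemma pbw_coords_P v f : pbw_coords v f -> pbw_coords (P v) (P_coef f).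
Proof. by apply: pbw_coords_map => [N g|N B g]; [apply: vanish_P_coef|apply: P_pbw_sum]. Qed.

Lemma pbw_coords_Q v f : pbw_coords v f -> pbw_coords (Q v) (Q_coef f).
Proof. by apply: pbw_coords_map => [N g|N B g]; [apply: vanish_Q_coef|apply: Q_pbw_sum]. Qed.

Lemma pbw_coords_chi v f : pbw_coords v f -> pbw_coords (chi v) (chi_coef f).
Proof.
apply: pbw_coords_map => [N g /vanish_chi_coef|N B g]; first exact: vanish_outsideW.
by move=> _ _; apply: chi_pbw_sum.
Qed.

Lemma pbw_coords_D v f : pbw_coords v f -> pbw_coords (D v) (D_coef f).
Proof.
apply: pbw_coords_map => [N g /vanish_D_coef|N B g]; first exact: vanish_outsideW.
by move=> _ _; apply: D_pbw_sum.
Qed.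

Lemma pbw_coords0 : pbw_coords 0 (fun _ _ _ _ => 0).
Proof.
exists 0%N; split=> // B _; rewrite pbw_sumE /box_sum big1 // => k _.
by rewrite big1 // => l _; rewrite big1 // => s _; rewrite big1 // => c _; rewrite scale0r.
Qed.

Lemma pbw_coords_eq0 v f : pbw_coords v f -> v = 0 -> forall k l s c, f k l s c = 0.
Proof. by move=> vf v_eq0; apply: pbw_coords_uniq pbw_coords0; rewrite -v_eq0. Qed.

(** * Coefficient recurrences of lowest vectors *)

Definition lowest_coef (f : coef) :=
  (forall k l s c, P_coef f k l s c = 0) /\ (forall k l s c, Q_coef f k l s c = 0).

Lemma pbw_coords_lowest v f : pbw_coords v f -> P v = 0 -> Q v = 0 -> lowest_coef f.
Proof.
move=> vf Pv Qv; split.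
  exact: pbw_coords_eq0 (pbw_coords_P vf) Pv.
exact: pbw_coords_eq0 (pbw_coords_Q vf) Qv.
Qed.

Lemma lowest_coef_S_weight f l c : lowest_coef f ->
  (dC + 2%:R^-1 - l%:R) * f 0%N l true c = 0.
Proof.
case=> Pf Qf; set x := dC + 2%:R^-1 - l%:R.
(* the (1, l, 0, .)-coefficients cancel between these two combinations *)
have xfT : m * (x * f 0%N l true true) =
    P_coef f 0 l false false - m * Q_coef f 0 l false true.
  by rewrite /P_coef /Q_coef /x /=; ring.
have xfF : x * f 0%N l true false =
    Q_coef f 0 l false false + 2%:R^-1 * P_coef f 0 l false true.
  by rewrite /P_coef /Q_coef /x /=; ring.
case: c; last by rewrite xfF Pf Qf mulr0 addr0.
by apply: (mulfI m_neq0); rewrite xfT Pf Qf mulr0 subr0.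
Qed.

Lemma lowest_coef_S_eq0 f : lowest_coef f -> (forall l c, f 0%N l true c = 0) ->
  forall k l c, f k l true c = 0.
Proof.
case=> Pf _ f0 k l c.
suff: (forall l, f k l true c = 0) /\ (forall l, f k.+1 l true c = 0) by case=> ->.
elim: k {l} => [|k [IHk IHk1]]; split=> // l.
  by apply: (mulfI m_neq0); have := Pf 0%N l true c; rewrite /P_coef /= !addr0 mul1r mulr0.
have := Pf k.+1 l true c; rewrite /P_coef /= IHk mulr0 !addr0 -mulrA => /eqP.
by rewrite mulf_eq0 (negbTE (natS_neq0 _)) mulf_eq0 (negbTE m_neq0) => /eqP.
Qed.

Definition at_origin (f : coef) :=
  forall k l (s c : bool), [|| 0 < k, 0 < l | s]%N -> f k l s c = 0.

Lemma lowest_coef_at_origin f : lowest_coef f -> (forall l c, f 0%N l true c = 0) ->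
  at_origin f.
Proof.
move=> low f0; have fS := lowest_coef_S_eq0 low f0; case: low => _ Qf.
have fk k l c : f k.+1 l false c = 0.
  have := Qf k l false (~~ c); rewrite /Q_coef /= fS negbK !mulr0 !addr0 => /eqP.
  rewrite !mulf_eq0 (negbTE (natS_neq0 _)) /=.
  by case: c => /=; rewrite ?oppr_eq0 ?mulf_eq0 ?invr_eq0 ?(negbTE m_neq0)
    ?(negbTE two_neq0) ?oner_eq0 /= => /eqP.
have fl k l c : f k l.+1 false c = 0.
  have := Qf k l true c; rewrite /Q_coef /= fS !mulr0 add0r addr0 => /eqP.
  rewrite !mulf_eq0 (negbTE (natS_neq0 _)) /=.
  by case: c; rewrite ?oppr_eq0 oner_eq0 => /eqP.
move=> [|k] [|l] [] c //= _; by rewrite ?fS ?fk ?fl.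
Qed.

Lemma pbw_coords_at_origin v f : pbw_coords v f -> at_origin f ->
  v = f 0%N 0%N false false *: v0 + f 0%N 0%N false true *: chi v0.
Proof.
move=> vf f0; apply: (pbw_coords_inj vf (pbw_coords_lincomb _ _
  (pbw_coords_pbw 0 0 false false) (pbw_coords_pbw 0 0 false true))) => k l s c.
rewrite /pbw_delta; case: k => [|k]; last by rewrite f0 //= !mulr0 addr0.
case: l => [|l]; last by rewrite f0 //= !mulr0 addr0.
case: s; first by rewrite f0 //= !mulr0 addr0.
by case: c; rewrite /= ?mulr0 ?mulr1 ?addr0 ?add0r.
Qed.

(** * The singular vector *)

Definition T_op v := G (G v) - (2%:R * m) *: K v.

Fact T_op_is_linear : linear T_op.
Proof.
move=> a x y; rewrite /T_op !(linearP G) (linearP K) scalerDr scalerBr !scalerA.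
by rewrite (mulrC a) addrACA opprD.
Qed.

HB.instance Definition _ := GRing.isLinear.Build R[i] V V *:%R T_op T_op_is_linear.

Definition Y_op v := G (X v) - m *: S v.

Lemma commPT v : P (T_op v) = T_op (P v).
Proof.
rewrite /T_op linearB linearZ_LR !commPG commPK !M_scalar linearD linearZ_LR.
have twice : (2%:R * m) *: G v = m *: G v + m *: G v.
  by rewrite mulr_natl mulr2n scalerDl.
rewrite scalerDr twice opprD addrA -(addrA _ (m *: G v) (m *: G v)).
by rewrite addrAC addrK.
Qed.

Lemma commQT v : Q (T_op v) = T_op (Q v) + 2%:R *: Y_op v.
Proof.
rewrite /T_op /Y_op linearB linearZ_LR !commQG commQK commXG linearD scalerDr.
rewrite scalerBr scalerA (mulrC 2%:R) scaler_nat mulr2n opprD -!addrA; congr (_ + _).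
by rewrite addrCA [in RHS]addrCA; congr (_ + _); rewrite addrCA.
Qed.

Lemma commYT v : Y_op (T_op v) = T_op (Y_op v).
Proof.
rewrite /Y_op /T_op (linearB X) (linearZ_LR X) !commXG commXK (linearB S) (linearZ_LR S).
rewrite -!commGS -commKS !(linearB G) !(linearZ_LR G) (linearB K) (linearZ_LR K).
rewrite commGK !scalerBr !scalerA (mulrC m) !opprB addrACA [RHS]addrACA.
by congr (_ + _); exact: addrC.
Qed.

Lemma commchiT v : chi (T_op v) = T_op (chi v).
Proof. by rewrite /T_op linearB linearZ_LR -!commGchi -commKchi. Qed.

Lemma commDT v : D (T_op v) = T_op (D v) + 2%:R *: T_op v.
Proof.
rewrite /T_op (linearB D) (linearZ_LR D) !commDG commDK (linearD G) scalerDr.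
rewrite scalerBr [2%:R *: G (G v)]scaler_nat mulr2n !scalerA (mulrC 2%:R (2%:R * m)).
by rewrite opprD -(addrA _ (G (G v)) (G (G v))) addrACA.
Qed.

Definition vs_seed := G v0 - 2%:R *: chi (S v0).

Lemma P_vs_seed : P vs_seed = 0.
Proof.
rewrite /vs_seed (linearB P) (linearZ_LR P) commPG commPchi commPS Pv0 !linear0.
by rewrite !add0r Xv0 chi_sqr M_scalar scalerA two_half subrr.
Qed.

Lemma Q_vs_seed : Q vs_seed = (1 + 2%:R * dC) *: chi v0.
Proof.
rewrite /vs_seed (linearB Q) (linearZ_LR Q) commQG acommQchi acommQS Qv0 !linear0.
rewrite add0r Xv0 sub0r Dv0 opprK (linearZ_LR chi) scalerN opprK scalerA.
by rewrite scalerDl scale1r.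
Qed.

Lemma D_vs_seed : D vs_seed = (- dC + 1) *: vs_seed.
Proof.
rewrite /vs_seed (linearB D) (linearZ_LR D) commDG commDchi commDS Dv0.
rewrite -[- (dC *: v0)]scaleNr (linearZ_LR G) (linearZ_LR S) (linearD chi) (linearZ_LR chi).
rewrite scalerBr [(- dC + 1) *: G v0]scalerDl scale1r scalerA mulrC -scalerA.
by rewrite [(- dC + 1) *: chi _]scalerDl scale1r.
Qed.

Lemma Y_vs_seed : Y_op vs_seed = - chi (T_op v0).
Proof.
have Xseed : X vs_seed = m *: S v0 - chi (G v0).
  rewrite /vs_seed (linearB X) (linearZ_LR X) commXG acommXchi acommXS Xv0 acommSchi.
  rewrite opprK (linearB chi) chi_sqr commGchi scalerN opprK scalerBr scalerA two_half.
  by rewrite [2%:R *: chi _]scaler_nat mulr2n opprD addrCA addNKr.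
have Sseed : S vs_seed = G (S v0) - 2%:R *: chi (K v0).
  by rewrite /vs_seed (linearB S) (linearZ_LR S) acommSchi S_sqr (linearN chi) opprK commGS.
rewrite /Y_op Xseed Sseed (linearB G) (linearZ_LR G) commGchi /T_op (linearB chi).
rewrite (linearZ_LR chi) -!commGchi -commKchi scalerBr opprB addrC -addrA addKr opprB.
by rewrite !scalerA (mulrC m).
Qed.

Definition sing_vec n := iter n T_op vs_seed.

Lemma P_sing_vec n : P (sing_vec n) = 0.
Proof. by rewrite /sing_vec (iter_commute _ _ commPT) P_vs_seed iter_linear0. Qed.

Lemma Q_sing_vec n :
  Q (sing_vec n) = (1 + 2%:R * dC - 2%:R * n%:R) *: chi (iter n T_op v0).
Proof.
elim: n => [|n IH]; first by rewrite /= Q_vs_seed mulr0 subr0.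
rewrite /sing_vec /= commQT IH (linearZ_LR T_op) /= -commchiT.
rewrite (iter_commute _ _ commYT) Y_vs_seed iter_linearN -(iter_commute _ _ commchiT).
rewrite -iterSr -iterS scalerN -scaleNr -scalerDl.
by congr (_ *: _); rewrite -[n.+1]addn1 natrD; ring.
Qed.

Lemma D_sing_vec n : D (sing_vec n) = (- dC + 1 + 2%:R * n%:R) *: sing_vec n.
Proof.
elim: n => [|n IH]; first by rewrite /= D_vs_seed mulr0 addr0.
rewrite /sing_vec /= commDT IH linearZ_LR -scalerDl.
by congr (_ *: _); rewrite -[n.+1]addn1 natrD; ring.
Qed.

Definition T_coef (f : coef) : coef := fun k l s c =>
  1 * G_coef (G_coef f) k l s c + - (2%:R * m) * K_coef f k l s c.

Lemma pbw_coords_T v f : pbw_coords v f -> pbw_coords (T_op v) (T_coef f).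
Proof.
move=> vf; have := pbw_coords_lincomb 1 (- (2%:R * m))
  (pbw_coords_G (pbw_coords_G vf)) (pbw_coords_K vf).
by rewrite scale1r scaleNr.
Qed.

Definition vs_coef n := iter n T_coef (fun k l s c =>
  1 * pbw_delta 1 0 false false k l s c + - 2%:R * pbw_delta 0 0 true true k l s c).

Lemma pbw_coords_sing_vec n : pbw_coords (sing_vec n) (vs_coef n).
Proof.
elim: n => [|n IH]; last exact: pbw_coords_T.
have := pbw_coords_lincomb 1 (- 2%:R) (pbw_coords_pbw 1 0 false false)
  (pbw_coords_pbw 0 0 true true).
by rewrite scale1r scaleNr.
Qed.

Lemma vs_coef_top n c :
  vs_coef n 0%N n true c = if c then - 2%:R * (- (2%:R * m)) ^+ n else 0.
Proof.
elim: n c => [|n IH] c; first by case: c; rewrite /vs_coef /pbw_delta /=; ring.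
by rewrite /vs_coef /= -/(vs_coef n) /T_coef /K_coef /= IH exprS; case: c => /=; ring.
Qed.

Lemma vs_coef_top_neq0 n : - 2%:R * (- (2%:R * m)) ^+ n != 0.
Proof. by rewrite mulf_neq0 ?expf_neq0 // oppr_eq0 ?mulf_neq0 // two_neq0. Qed.

Lemma vs_coef_origin n c : vs_coef n 0%N 0%N false c = 0.
Proof.
case: n => [|n]; first by rewrite /vs_coef /pbw_delta /=; ring.
by rewrite /vs_coef /= /T_coef /K_coef /=; ring.
Qed.

(** * Classification of singular vectors *)

Lemma eqC_half_nat n : (dC + 2%:R^-1 == n%:R) = (d + 2%:R^-1 == n%:R).
Proof.
by rewrite -(inj_eq (@complexI R)) rmorphD fmorphV !rmorph_nat.
Qed.

Lemma pbw_coords_eigen v f lam : pbw_coords v f -> D v = lam *: v ->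
  forall k l s c, (pbw_weight k l s - lam) * f k l s c = 0.
Proof.
move=> vf Dv k l s c; have Dv' : D v = lam *: v + 0 *: v by rewrite scale0r addr0.
have := pbw_coords_uniq (pbw_coords_D vf) _ k l s c.
rewrite Dv' => /(_ _ (pbw_coords_lincomb _ _ vf vf)).
by rewrite /D_coef mul0r addr0 mulrBl => ->; rewrite subrr.
Qed.

Lemma singular_origin_coef v f : pbw_coords v f -> singular o v0 v ->
  forall c, f 0%N 0%N false c = 0.
Proof.
(* a nonzero coefficient at the origin fixes the eigenvalue of D to -d,
   which only v0 and chi v0 have *)
move=> vf [[lam Dv] not_span _ _ _] c; apply/eqP/negP => /negP f00.
have eigen := pbw_coords_eigen vf Dv.
have lamE : lam = - dC.
  move: (eigen 0%N 0%N false c) => /eqP; rewrite mulf_eq0 (negbTE f00) orbF subr_eq0.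
  by rewrite /pbw_weight !mulr0 !addr0 => /eqP <-.
apply: not_span; exists (f 0%N 0%N false false), (f 0%N 0%N false true).
apply: pbw_coords_at_origin => // k l s c' kls.
have : (k + 2 * l + s)%:R * f k l s c' = 0.
  by rewrite -(eigen k l s c') lamE /pbw_weight !natrD ?natrM; congr (_ * _); ring.
by move/eqP; rewrite mulf_eq0 pnatr_eq0 => /orP[/eqP|/eqP //]; case: s kls => /=; lia.
Qed.

Lemma singular_lowest_coef v f : pbw_coords v f -> singular o v0 v -> lowest_coef f.
Proof. by move=> vf [_ _ _ Pv Qv]; apply: pbw_coords_lowest vf Pv Qv. Qed.

Lemma singular_half_nat v : singular o v0 v -> d + 2%:R^-1 \is a Num.nat.
Proof.
move=> sing; have [f vf] := pbw_coords_exists v.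
have low := singular_lowest_coef vf sing.
apply/negPn/negP => not_nat; case: sing => _ not_span _ _ _; apply: not_span.
exists (f 0%N 0%N false false), (f 0%N 0%N false true).
apply: pbw_coords_at_origin => //; apply: lowest_coef_at_origin => // l c.
have := lowest_coef_S_weight l c low; move/eqP; rewrite mulf_eq0 subr_eq0 eqC_half_nat.
by case/orP=> [/eqP dl|/eqP //]; case/negP: not_nat; rewrite dl natr_nat.
Qed.

Lemma Q_sing_vec_eq0 n : d + 2%:R^-1 = n%:R -> Q (sing_vec n) = 0.
Proof.
move=> dn; have dCn : dC = n%:R - 2%:R^-1.
  by apply/eqP; rewrite eq_sym subr_eq eq_sym eqC_half_nat dn.
by rewrite Q_sing_vec dCn mulrBr mulfV ?two_neq0 // addrCA subrr addr0 subrr scale0r.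
Qed.

Lemma singular_sing_vec n : d + 2%:R^-1 = n%:R -> singular o v0 (sing_vec n).
Proof.
move=> dn; have Qvs := Q_sing_vec_eq0 dn; split=> //.
- by exists (- dC + 1 + 2%:R * n%:R); apply: D_sing_vec.
- case=> a [b vs_ab]; have := pbw_coords_uniq (pbw_coords_sing_vec n) _ 0 n true true.
  rewrite vs_ab => /(_ _ (pbw_coords_lincomb a b (pbw_coords_pbw 0 0 false false)
    (pbw_coords_pbw 0 0 false true))).
  rewrite vs_coef_top /pbw_delta /= !andbF !mulr0 addr0 => /eqP.
  by rewrite (negbTE (vs_coef_top_neq0 n)).
- exact: H_eq0_of_Q.
- exact: P_sing_vec.
Qed.

Lemma sing_vec_unique n w : d + 2%:R^-1 = n%:R -> singular o v0 w ->
  exists a b, w = a *: sing_vec n + b *: chi (sing_vec n).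
Proof.
move=> dn sing; have [f wf] := pbw_coords_exists w.
set gam := - 2%:R * (- (2%:R * m)) ^+ n.
have gam_neq0 : gam != 0 := vs_coef_top_neq0 n.
have mgam_neq0 : m / 2%:R * gam != 0.
  by rewrite mulf_neq0 // mulf_neq0 // invr_eq0 two_neq0.
(* match the coefficients of [w] at (0, n, 1, .) *)
set a := f 0%N n true true / gam; set b := f 0%N n true false / (m / 2%:R * gam).
exists a, b; apply/eqP; rewrite -subr_eq0; apply/eqP.
set h := w - _.
have vsf := pbw_coords_sing_vec n.
have := pbw_coords_lincomb 1 (-1) wf (pbw_coords_lincomb a b vsf (pbw_coords_chi vsf)).
rewrite scale1r scaleN1r -/h; set hc := fun k l s c => _ => hf.
have Ph : P h = 0.
  rewrite /h linearB linearD !linearZ_LR commPchi P_sing_vec linear0.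
  by case: sing => _ _ _ -> _; rewrite (linear0 chi) scaler0 addr0 subrr.
have Qh : Q h = 0.
  rewrite /h linearB linearD !linearZ_LR acommQchi Q_sing_vec_eq0 //.
  by case: sing => _ _ _ _ ->; rewrite (linear0 chi) oppr0 !scaler0 addr0 subrr.
have top l c : hc 0%N l true c = 0.
  case: (eqVneq l n) => [->|ln].
    rewrite /hc /chi_coef /= !vs_coef_top.
    by case: c; rewrite /= ?mulr0 ?addr0 ?add0r ?mul1r /a /b divfK // mulN1r subrr.
  have := lowest_coef_S_weight l c (pbw_coords_lowest hf Ph Qh); move/eqP.
  rewrite mulf_eq0 subr_eq0 eqC_half_nat dn eqr_nat eq_sym (negbTE ln) /=.
  by move/eqP.
have orig := lowest_coef_at_origin (pbw_coords_lowest hf Ph Qh) top.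
rewrite (pbw_coords_at_origin hf orig) /hc /chi_coef /= !vs_coef_origin.
by rewrite !(singular_origin_coef wf sing) !(mulr0, addr0) !scale0r addr0.
Qed.

Lemma verma_singular_vectors :
  ((exists vs : V, unique_singular o v0 vs) <-> (exists n : nat, d + 2%:R^-1 = n%:R)) /\
  (forall n : nat, d + 2%:R^-1 = n%:R -> unique_singular o v0 (vs_formula o m v0 n)).
Proof.
have unique_vs n : d + 2%:R^-1 = n%:R -> unique_singular o v0 (vs_formula o m v0 n).
  by move=> dn; split; [apply: singular_sing_vec | move=> w; apply: sing_vec_unique].
split=> //; split=> [[v [sing _]]|[n dn]]; first exact/natrP/(singular_half_nat sing).
by exists (vs_formula o m v0 n); apply: unique_vs.
Qed.

End Verma.
End S11.

Theorem proposition1 (R : realType) (V : lmodType R[i]) (o : s11_ops V)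
  (d : R) (m : R[i]) (v0 : V) :
  m != 0 -> is_verma o d m v0 ->
  ((exists vs : V, unique_singular o v0 vs) <->
   (exists n : nat, d + 2%:R^-1 = n%:R)) /\
  (forall n : nat, d + 2%:R^-1 = n%:R ->
     unique_singular o v0 (vs_formula o m v0 n)).
Proof.
move=> m_neq0 [rep odd_chi [Qv0 [Pv0 [_ [Dv0 [Mv0 Xv0]]]]] span free].
exact: verma_singular_vectors.
Qed.
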